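(* Let $q$ be a prime power and let $\mathcal{F}=(\mathcal{F}_1,\ldots,\mathcal{F}_r)$ be a flag of type $(t_1,\ldots,t_r)$ on $\mathbb{F}_{q^n}$. Assume $m$ is a divisor of $n$ with $m=t_i$ for some $i\in\{1,\ldots,r\}$. If $|\mathrm{Orb}(\mathcal{F})|=\frac{q^n-1}{q^m-1}$, then $m=t_1$, the code $\mathrm{Orb}(\mathcal{F}_1)$ equals $\mathrm{Orb}(\mathbb{F}_{q^m})=\{\mathbb{F}_{q^m}\gamma:\gamma\in\mathbb{F}_{q^n}^*\}$ (the $m$-spread of $\mathbb{F}_{q^n}$ formed by the multiplicative translates of the subfield $\mathbb{F}_{q^m}$), and $m$ divides $t_j$ for every $j\in\{1,\ldots,r\}$.
   Context: $\mathbb{F}_{q^n}$ is regarded as an $\mathbb{F}_q$-vector space. A flag of type $(t_1,\ldots,t_r)$ on $\mathbb{F}_{q^n}$ is a sequence $(\mathcal{F}_1,\ldots,\mathcal{F}_r)$ of $\mathbb{F}_q$-subspaces with $\{0\}\subsetneq\mathcal{F}_1\subsetneq\cdots\subsetneq\mathcal{F}_r\subsetneq\mathbb{F}_{q^n}$ and $\dim_{\mathbb{F}_q}\mathcal{F}_i=t_i$. For $\gamma\in\mathbb{F}_{q^n}^*$, $\mathcal{U}\gamma=\{u\gamma:u\in\mathcal{U}\}$ and $\mathcal{F}\gamma=(\mathcal{F}_1\gamma,\ldots,\mathcal{F}_r\gamma)$. The cyclic orbit codes are $\mathrm{Orb}(\mathcal{U})=\{\mathcal{U}\gamma:\gamma\in\mathbb{F}_{q^n}^*\}$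 and $\mathrm{Orb}(\mathcal{F})=\{\mathcal{F}\gamma:\gamma\in\mathbb{F}_{q^n}^*\}$. An $m$-spread of $\mathbb{F}_{q^n}$ is a set of $m$-dimensional $\mathbb{F}_q$-subspaces that pairwise intersect in $\{0\}$ and whose union is $\mathbb{F}_{q^n}$. *)

From HB Require Import structures.
From mathcomp Require Import all_boot all_order all_algebra all_field.
Set Implicit Arguments. Unset Strict Implicit. Unset Printing Implicit Defensive.
Import GRing.Theory.
Local Open Scope ring_scope.

(* F = F_q (a finite field), L = F_{q^n} regarded as a finite-dimensional
   F-vector space (fieldExtType F).  Subspaces are {vspace L}. *)
Section Defs.
Variables (F : finFieldType) (L : fieldExtType F).

Definition vsmul (U : {vspace L}) (g : L) : {vspace L} := (U * <[g]>)%VS.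

(* a flag is a seq [:: F_1; ...; F_r] of subspaces with
   {0} < F_1 < ... < F_r < L (strict inclusions), r >= 1 *)
Definition strict_sub (U V : {vspace L}) : bool := (U <= V)%VS && (U != V).

Definition is_flag (Fl : seq {vspace L}) : bool :=
  [&& (0 < size Fl)%N, path strict_sub 0%VS Fl & strict_sub (last 0%VS Fl) fullv].

Definition flag_type (Fl : seq {vspace L}) : seq nat := map (fun U => \dim U) Fl.

Definition flag_mul (Fl : seq {vspace L}) (g : L) : seq {vspace L} :=
  map (fun U => vsmul U g) Fl.

(* Orb(U) and Orb(F), as duplicate-free lists (gamma ranges over F_{q^n}^* ) *)
Definition orb_space (U : {vspace L}) : seq {vspace L} :=
  undup [seq vsmul U (g : L) | g <- enum (finvect_type L) & g != 0].

Definition orb_flag (Fl : seq {vspace L}) : seq (seq {vspace L}) :=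
  undup [seq flag_mul Fl (g : L) | g <- enum (finvect_type L) & g != 0].

End Defs.

From HB Require Import structures.
From mathcomp Require Import all_boot all_order all_algebra all_field.
Set Implicit Arguments. Unset Strict Implicit. Unset Printing Implicit Defensive.
Import GRing.Theory.
Local Open Scope ring_scope.

(* The nonzero elements of F_{q^n} fixing the flag are the nonzero elements of
   the subfield K = {x | x F_i <= F_i for all i}, so counting the orbit gives
   |Orb(F)| (q^(dim K) - 1) = q^n - 1, whence dim K = m.  Every F_i is a
   K-vector space, so m divides every t_i; since t_1 <= t_i = m, this forces
   t_1 = m.  Hence F_1 = K u for any nonzero u in F_1, and K is the unique
   subfield of order q^m. *)

Section Translates.
Variables (F : finFieldType) (L : fieldExtType F).
Implicit Types (U : {vspace L}) (Fl : seq {vspace L}).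

Lemma vsmul1 U : vsmul U 1 = U.
Proof. exact: prodv1. Qed.

Lemma vsmulM U g h : vsmul (vsmul U g) h = vsmul U (g * h).
Proof. by rewrite /vsmul -prodvA prodv_line. Qed.

Lemma vsmul_limg U g : vsmul U g = (amulr g @: U)%VS.
Proof.
apply: subv_anti; apply/andP; split.
  apply/prodvP => u v Uu /vlineP[a ->].
  by rewrite -scalerAr memvZ // (_ : u * g = amulr g u) ?memv_img // lfunE.
by apply/subvP => _ /memv_imgP[u Uu ->]; rewrite lfunE memv_mul ?memv_line.
Qed.

Lemma dim_vsmul U g : g != 0 -> \dim (vsmul U g) = \dim U.
Proof.
move=> nz_g; rewrite vsmul_limg limg_dim_eq //.
by rewrite (eqP (lker0_amulr _)) ?capv0 ?unitfE.
Qed.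

Lemma vsmul_eqEsubv U g : g != 0 -> (vsmul U g == U) = (vsmul U g <= U)%VS.
Proof. by move=> nz_g; rewrite eqEdim dim_vsmul // leqnn andbT. Qed.

Lemma flag_mul1 Fl : flag_mul Fl 1 = Fl.
Proof. by rewrite /flag_mul (eq_map (@vsmul1)) map_id. Qed.

Lemma flag_mulM Fl g h : flag_mul (flag_mul Fl g) h = flag_mul Fl (g * h).
Proof. by rewrite /flag_mul -map_comp; apply: eq_map => U; rewrite /= vsmulM. Qed.

End Translates.

Section Stabilizer.
Variables (F : finFieldType) (L : fieldExtType F).
Implicit Types (U : {vspace L}) (Fl : seq {vspace L}).

Definition vstab U : {vspace L} :=
  (\bigcap_(u : finvect_type L | (u : L) \in U) (amull (u : L) @^-1: U))%VS.

Lemma mem_vstab U x : (x \in vstab U) = (vsmul U x <= U)%VS.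
Proof.
rewrite memvE; apply/subv_bigcapP/prodvP => [xU u _ Uu /vlineP[a ->] | xU u Uu].
  have := xU u Uu; rewrite -memvE -memv_preim lfunE /= => xuU.
  by rewrite -scalerAr memvZ.
by rewrite -memvE -memv_preim lfunE /= xU ?memv_line.
Qed.

Definition flag_stab Fl : {vspace L} := (\bigcap_(U <- Fl) vstab U)%VS.

Lemma mem_flag_stab Fl x :
  (x \in flag_stab Fl) = all (fun U => vsmul U x <= U)%VS Fl.
Proof.
rewrite /flag_stab; elim: Fl => [|U Fl IHFl]; first by rewrite big_nil memvf.
by rewrite big_cons memv_cap IHFl mem_vstab.
Qed.

Lemma flag_stab_aspace Fl : is_aspace (flag_stab Fl).
Proof.
apply/andP; split.
  by apply: has_algid1; rewrite mem_flag_stab; apply/allP => U _; rewrite vsmul1.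
apply/prodvP => x y; rewrite !mem_flag_stab => /allP xFl /allP yFl.
apply/allP => U FlU; rewrite -vsmulM.
exact: subv_trans (prodvSl _ (xFl U FlU)) (yFl U FlU).
Qed.

Canonical flag_stab_field Fl : {subfield L} := ASpace (flag_stab_aspace Fl).

Lemma flag_stab_module Fl U : U \in Fl -> (flag_stab Fl * U <= U)%VS.
Proof.
move=> FlU; apply/prodvP => x u; rewrite mem_flag_stab => /allP/(_ U FlU) xU Uu.
by rewrite mulrC (subvP xU) // memv_mul ?memv_line.
Qed.

Lemma flag_mul_fixed Fl g : g != 0 -> (flag_mul Fl g == Fl) = (g \in flag_stab Fl).
Proof.
move=> nz_g; rewrite mem_flag_stab.
by elim: Fl => //= U Fl IHFl; rewrite eqseq_cons IHFl vsmul_eqEsubv.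
Qed.

End Stabilizer.

Lemma size_undup_const_count (T : eqType) (s : seq T) c :
  {in s, forall x, count_mem x s = c} -> (size (undup s) * c = size s)%N.
Proof.
move=> count_s; rewrite -(perm_size (perm_count_undup s)) size_flatten /shape.
set l := map _ _; have /all_pred1P -> : all (pred1 c) l.
  apply/allP => _ /mapP[_ /mapP[x xs ->] ->].
  by rewrite /= size_nseq count_s // -mem_undup.
by rewrite sumn_nseq !size_map mulnC.
Qed.

Lemma count_enumT (T : finType) (P : pred T) : count P (enum T) = #|P|.
Proof.
rewrite cardE /enum_mem size_filter count_filter.
by apply: eq_count => x; rewrite /= andbT.
Qed.

Section OrbitStabilizer.
Variables (F : finFieldType) (L : fieldExtType F).
Local Notation T := (finvect_type L).
Implicit Types (V : {vspace L}) (Fl : seq {vspace L}).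

Lemma card_vspace_nonzero V :
  #|[pred g : T | (g != 0) && ((g : L) \in V)]| = (#|F| ^ \dim V).-1.
Proof.
rewrite -(@card_vspace F T _ V) [in RHS](cardD1 0) mem0v add1n /=.
by apply: eq_card => g; rewrite !inE.
Qed.

Lemma card_flag_fiber Fl (h : T) : h != 0 ->
  #|[pred g : T | (g != 0) && (flag_mul Fl g == flag_mul Fl h)]|
    = (#|F| ^ \dim (flag_stab Fl)).-1.
Proof.
move=> nz_h; rewrite -card_vspace_nonzero -[RHS](card_image (mulIf nz_h)).
apply: eq_card => g; rewrite inE /=.
apply/andP/imageP => [[nz_g /eqP eq_gh] | [x /andP[nz_x stab_x] ->]].
  exists (g / h); last by rewrite mulfVK.
  rewrite inE mulf_neq0 ?invr_eq0 //= -flag_mul_fixed ?mulf_neq0 ?invr_eq0 //.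
  by rewrite -flag_mulM eq_gh flag_mulM mulfV // flag_mul1.
rewrite mulf_neq0 //; move: stab_x; rewrite -flag_mul_fixed // => /eqP fix_x.
by rewrite -flag_mulM fix_x.
Qed.

Lemma orbit_stabilizer Fl :
  (size (orb_flag Fl) * (#|F| ^ \dim (flag_stab Fl)).-1 = (#|F| ^ \dim {:L}).-1)%N.
Proof.
rewrite size_undup_const_count => [|_ /mapP[h + ->]].
  rewrite size_map size_filter (count_enumT (fun g : T => g != 0)) cardC1.
  by rewrite -(@card_vspace F T _ fullv) card_vspacef.
rewrite mem_filter => /andP[nz_h _]; rewrite count_map -(card_flag_fiber Fl nz_h).
by rewrite count_filter -count_enumT; apply: eq_count => g; rewrite /= andbC eq_sym.
Qed.

End OrbitStabilizer.

Lemma predn_expnI q a b : (1 < q)%N -> (q ^ a).-1 = (q ^ b).-1 -> a = b.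
Proof.
move=> q_gt1 /(congr1 S); rewrite !prednK ?expn_gt0 ?(ltnW q_gt1) //.
exact: expnI.
Qed.

Lemma dim_flag_stab (F : finFieldType) (L : fieldExtType F) (Fl : seq {vspace L}) m :
  (m %| \dim {:L})%N -> (0 < m)%N ->
  size (orb_flag Fl) = ((#|F| ^ \dim {:L} - 1) %/ (#|F| ^ m - 1))%N ->
  \dim (flag_stab Fl) = m.
Proof.
move=> m_dvd m_gt0; rewrite !subn1 => size_orb.
have q_gt1 : (1 < #|F|)%N := finNzRing_gt1 F.
have expm_gt1 : (1 < #|F| ^ m)%N by rewrite -(expn0 #|F|) ltn_exp2l.
have dvd_pred : ((#|F| ^ m).-1 %| (#|F| ^ \dim {:L}).-1)%N.
  by have [k ->] := dvdnP m_dvd; rewrite mulnC expnM dvdn_pred_predX.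
have orb_gt0 : (0 < size (orb_flag Fl))%N.
  have expn_gt1 : (1 < #|F| ^ \dim {:L})%N by rewrite -(expn0 #|F|) ltn_exp2l ?adim_gt0.
  rewrite size_orb divn_gt0; last by rewrite ltn_predRL.
  by apply: dvdn_leq; rewrite // ltn_predRL.
have := orbit_stabilizer Fl; rewrite -(divnK dvd_pred) -size_orb.
by move/eqP; rewrite eqn_pmul2l // => /eqP /predn_expnI ->.
Qed.

Section Flags.
Variables (F : finFieldType) (L : fieldExtType F).
Implicit Types (U : {vspace L}) (Fl : seq {vspace L}).

Lemma strict_sub_trans : transitive (@strict_sub F L).
Proof.
move=> V U W /andP[sUV nUV] /andP[sVW nVW]; rewrite /strict_sub (subv_trans sUV sVW).
by apply: contraNneq nUV => eqUW; rewrite eqEsubv sUV eqUW.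
Qed.

Lemma flag_dim_gt0 Fl U : is_flag Fl -> U \in Fl -> (0 < \dim U)%N.
Proof.
case/and3P=> _ /(order_path_min strict_sub_trans)/allP sub0 _ /sub0/andP[_].
by rewrite lt0n dimv_eq0 eq_sym.
Qed.

Lemma flag_head_subv Fl U : is_flag Fl -> U \in Fl -> (head 0%VS Fl <= U)%VS.
Proof.
case: Fl => //= U1 Fl /and3P[_ /andP[_ /(order_path_min strict_sub_trans)/allP subU1] _].
by rewrite in_cons => /predU1P[-> // | /subU1/andP[]].
Qed.

Lemma flag_head_mem Fl : is_flag Fl -> head 0%VS Fl \in Fl.
Proof. by case: Fl => // U Fl _; rewrite mem_head. Qed.

Lemma head_flag_type Fl : head 0%N (flag_type Fl) = \dim (head 0%VS Fl).
Proof. by case: Fl => /=; rewrite ?dimv0. Qed.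

End Flags.

Section Spread.
Variables (F : finFieldType) (L : fieldExtType F).

Lemma subfield_dim_inj (K1 K2 : {subfield L}) :
  \dim K1 = \dim K2 -> K1 = K2 :> {vspace L}.
Proof.
by move=> eq_dim; apply/vspaceP => x; rewrite !Fermat's_little_theorem /= eq_dim.
Qed.

Lemma translate_of_field_module (K : {subfield L}) (U : {vspace L}) :
  (K * U <= U)%VS -> \dim U = \dim K -> exists2 u, u != 0 & U = vsmul K u.
Proof.
move=> sKU dimU; have nz_u : vpick U != 0.
  by rewrite vpick0 -dimv_eq0 dimU -lt0n adim_gt0.
exists (vpick U) => //; apply/esym/eqP.
rewrite eqEdim dim_vsmul // dimU leqnn andbT; apply/prodvP => k _ Kk /vlineP[a ->].
by rewrite -scalerAr memvZ // (subvP sKU) // memv_mul ?memv_pick.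
Qed.

Lemma orb_space_vsmul (U : {vspace L}) (u : L) : u != 0 ->
  orb_space (vsmul U u) =i orb_space U.
Proof.
move=> nz_u V; rewrite /orb_space !mem_undup.
apply/mapP/mapP => -[g]; rewrite mem_filter => /andP[nz_g _] ->.
  exists (u * g : finvect_type L); last by rewrite vsmulM.
  by rewrite mem_filter mulf_neq0 //= (mem_enum (finvect_type L)).
exists (u^-1 * g); last by rewrite vsmulM mulrA mulfV ?mul1r.
by rewrite mem_filter mulf_neq0 ?invr_eq0 //= (mem_enum (finvect_type L)).
Qed.

End Spread.

Theorem corollary3p11 (F : finFieldType) (L : fieldExtType F) (q n m : nat)
    (Fl : seq {vspace L}) :
  #|F| = q -> \dim {: L}%VS = n ->
  is_flag Fl ->
  (m %| n)%N -> m \in flag_type Fl ->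
  size (orb_flag Fl) = ((q ^ n - 1) %/ (q ^ m - 1))%N ->
  [/\ m = head 0%N (flag_type Fl),
      (forall K : {subfield L}, \dim K = m ->
         orb_space (head 0%VS Fl) =i orb_space (K : {vspace L}))
    & forall j, j \in flag_type Fl -> (m %| j)%N].
Proof.
move=> <- <- Fl_flag m_dvd /mapP[U0 FlU0 dim_U0]; subst m => size_orb.
have dim_stab := dim_flag_stab m_dvd (flag_dim_gt0 Fl_flag FlU0) size_orb.
have dvd_dim U : U \in Fl -> (\dim U0 %| \dim U)%N.
  by move=> FlU; rewrite -dim_stab field_module_dimS ?flag_stab_module.
set U1 := head 0%VS Fl; have FlU1 : U1 \in Fl := flag_head_mem Fl_flag.
have dim_U1 : \dim U1 = \dim U0.
  apply/eqP; rewrite eqn_leq dimvS ?flag_head_subv //=.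
  by rewrite dvdn_leq ?dvd_dim ?(flag_dim_gt0 Fl_flag).
split.
- by rewrite head_flag_type.
- move=> K dimK; rewrite -dim_stab in dim_U1.
  have [u nz_u ->] := translate_of_field_module (flag_stab_module FlU1) dim_U1.
  move=> V; rewrite orb_space_vsmul //.
  by rewrite (@subfield_dim_inj _ _ (flag_stab_field Fl) K) // dimK.
- by move=> j /mapP[U FlU ->]; apply: dvd_dim.
Qed.
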